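(* Let $A=(a_{ij})$, $B=(b_{ij})$ be real $2\times2$ payoff tables and let $\mathcal C=\mathbb V(f)\subset\mathbb P^2_{\mathbb C}$ be the Spohn cubic. Then $\mathcal C$ is reducible (equivalently, $f$ is a nonzero polynomial that factors nontrivially over $\mathbb C$) if and only if $f\neq0$ and at least one of the following holds: (1) $a_{11}=a_{12}$; (2) $a_{11}=a_{21}$; (3) $a_{21}=a_{22}$; (4) $b_{11}=b_{12}$; (5) $b_{11}=b_{21}$; (6) $b_{12}=b_{22}$; (7) $a_{12}=a_{22}$ and $b_{21}=b_{22}$; (8) $a_{12}=a_{21}$ and $b_{12}=b_{21}$; (9) $0=a_{12}(b_{12}-b_{22})+a_{21}(b_{22}-b_{21})+a_{22}(b_{21}-b_{12})=a_{11}(b_{22}-b_{12})+a_{21}(b_{11}-b_{22})+a_{22}(b_{12}-b_{11})=a_{11}(b_{22}-b_{21})+a_{12}(b_{11}-b_{22})+a_{22}(b_{21}-b_{11})$; (10) $0=a_{11}(b_{12}-b_{21})+a_{12}(b_{21}-b_{22})+a_{21}(b_{22}-b_{12})=a_{12}(b_{11}-b_{21})+a_{21}(b_{12}-b_{11})+a_{22}(b_{21}-b_{12})=a_{11}(b_{11}-b_{21})+a_{21}(b_{22}-b_{11})+a_{22}(b_{21}-b_{22})$; (11) $0=a_{12}(b_{22}-b_{21})+a_{21}(b_{12}-b_{22})+a_{22}(b_{21}-b_{12})=a_{11}(b_{22}-b_{21})+a_{21}(b_{11}-b_{22})+a_{22}(b_{21}-b_{11})=a_{11}(b_{22}-b_{12})+a_{12}(b_{11}-b_{22})+a_{22}(b_{12}-b_{11})$;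 (12) $0=a_{11}(b_{12}-b_{21})+a_{12}(b_{22}-b_{12})+a_{21}(b_{21}-b_{22})=a_{12}(b_{11}-b_{12})+a_{21}(b_{21}-b_{11})+a_{22}(b_{12}-b_{21})=a_{11}(b_{11}-b_{21})+a_{12}(b_{22}-b_{12})+a_{21}(b_{21}-b_{11})+a_{22}(b_{12}-b_{22})$.
   Context: The Spohn cubic of the game is the plane curve $\mathcal C=\mathbb V(f)\subset\mathbb P^2_{\mathbb C}$ with coordinates $[x:y:z]$ (obtained from the Spohn variety by eliminating $p_{22}$ and renaming $x=p_{11},y=p_{12},z=p_{21}$), where $f=c_1x^2y+c_2x^2z+c_3xy^2+c_4xz^2+c_5y^2z+c_6yz^2+c_7xyz$ with $c_1=(a_{11}-a_{22})(b_{11}-b_{12})$, $c_2=(a_{11}-a_{21})(b_{22}-b_{11})$, $c_3=(a_{12}-a_{22})(b_{11}-b_{12})$, $c_4=(a_{11}-a_{21})(b_{22}-b_{21})$, $c_5=(a_{12}-a_{22})(b_{21}-b_{12})$, $c_6=(a_{12}-a_{21})(b_{22}-b_{21})$, $c_7=(a_{12}-a_{21})(b_{22}-b_{11})+(a_{11}-a_{22})(b_{21}-b_{12})$. *)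

From HB Require Import structures.
From mathcomp Require Import all_boot all_order all_algebra.
From mathcomp Require Import reals.
From mathcomp Require Import complex.
From mathcomp Require Import mpoly.

Set Implicit Arguments.
Unset Strict Implicit.
Unset Printing Implicit Defensive.

Import Order.TTheory GRing.Theory Num.Theory.
Local Open Scope ring_scope.

Definition spohn_c1 (R : realType) (a11 a12 a21 a22 b11 b12 b21 b22 : R) : R :=
  (a11 - a22) * (b11 - b12).
Definition spohn_c2 (R : realType) (a11 a12 a21 a22 b11 b12 b21 b22 : R) : R :=
  (a11 - a21) * (b22 - b11).
Definition spohn_c3 (R : realType) (a11 a12 a21 a22 b11 b12 b21 b22 : R) : R :=
  (a12 - a22) * (b11 - b12).
Definition spohn_c4 (R : realType) (a11 a12 a21 a22 b11 b12 b21 b22 : R) : R :=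
  (a11 - a21) * (b22 - b21).
Definition spohn_c5 (R : realType) (a11 a12 a21 a22 b11 b12 b21 b22 : R) : R :=
  (a12 - a22) * (b21 - b12).
Definition spohn_c6 (R : realType) (a11 a12 a21 a22 b11 b12 b21 b22 : R) : R :=
  (a12 - a21) * (b22 - b21).
Definition spohn_c7 (R : realType) (a11 a12 a21 a22 b11 b12 b21 b22 : R) : R :=
  (a12 - a21) * (b22 - b11) + (a11 - a22) * (b21 - b12).

Definition spohn_cubic (R : realType) (a11 a12 a21 a22 b11 b12 b21 b22 : R)
    : {mpoly R[i][3]} :=
  let x : {mpoly R[i][3]} := 'X_(inord 0) in
  let y : {mpoly R[i][3]} := 'X_(inord 1) in
  let z : {mpoly R[i][3]} := 'X_(inord 2) in
  let C (c : R) : {mpoly R[i][3]} := ((c%:C)%C)%:MP in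
  C (spohn_c1 a11 a12 a21 a22 b11 b12 b21 b22) * x ^+ 2 * y
  + C (spohn_c2 a11 a12 a21 a22 b11 b12 b21 b22) * x ^+ 2 * z
  + C (spohn_c3 a11 a12 a21 a22 b11 b12 b21 b22) * x * y ^+ 2
  + C (spohn_c4 a11 a12 a21 a22 b11 b12 b21 b22) * x * z ^+ 2
  + C (spohn_c5 a11 a12 a21 a22 b11 b12 b21 b22) * y ^+ 2 * z
  + C (spohn_c6 a11 a12 a21 a22 b11 b12 b21 b22) * y * z ^+ 2
  + C (spohn_c7 a11 a12 a21 a22 b11 b12 b21 b22) * x * y * z.

(* A multivariate polynomial is reducible when it is nonzero and is a product
   of two non-constant polynomials (msize p = 1 + total degree, so
   msize p > 1 means p is non-constant). *)
Definition mpoly_reducible (F : fieldType) (n : nat) (p : {mpoly F[n]}) : Prop :=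
  p != 0 /\ exists g h : {mpoly F[n]}, [/\ (1 < msize g)%N, (1 < msize h)%N & p = g * h].

From HB Require Import structures.
From mathcomp Require Import all_boot all_order all_algebra.
From mathcomp Require Import reals.
From mathcomp Require Import complex.
From mathcomp Require Import mpoly.
From mathcomp Require Import ring zify.
Import Order.TTheory GRing.Theory Num.Theory.
Local Open Scope ring_scope.
Set Implicit Arguments.
Unset Strict Implicit.
Unset Printing Implicit Defensive.

(* In the coordinates p = a11 - a21, q = a12 - a22, r = a21 - a22,
   u = b11 - b12, w = b22 - b21, s = b21 - b12 the Spohn cubic is the form
   [spohn_form p q r u w s], and conditions (1)-(12) become [spohn_conds].
   A factorization of a cubic form contains a linear factor, so a reducible
   Spohn cubic vanishes on a plane through the origin (a linear factor with a
   constant term is reduced to this case by homogeneity). Parametrizing the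
   plane as z = 0, y = t z or x = -(b y + g z) and asking all coefficients of
   the restricted form to vanish leads, after a case analysis, to one of the
   conditions. Conversely every condition comes with an explicit
   factorization into a linear and a quadratic form. *)

Lemma lincomb1_eq0 (K : comNzRingType) (T a A : K) : A = 0 -> T = a * A -> T = 0.
Proof. by move=> -> ->; rewrite mulr0. Qed.

Lemma lincomb2_eq0 (K : comNzRingType) (T a b A B : K) :
  A = 0 -> B = 0 -> T = a * A + b * B -> T = 0.
Proof. by move=> -> -> ->; rewrite !mulr0 addr0. Qed.

Lemma lincomb3_eq0 (K : comNzRingType) (T a b c A B C : K) :
  A = 0 -> B = 0 -> C = 0 -> T = a * A + b * B + c * C -> T = 0.
Proof. by move=> -> -> -> ->; rewrite !mulr0 !addr0. Qed.

Lemma mulf_eq0_or (K : idomainType) (a b : K) : a * b = 0 -> a = 0 \/ b = 0.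
Proof. by move/eqP; rewrite mulf_eq0 => /orP [/eqP|/eqP]; [left|right]. Qed.

Lemma eq0_of_mulf_l (K : idomainType) (a b : K) : a != 0 -> a * b = 0 -> b = 0.
Proof. by move=> a0 /mulf_eq0_or [/eqP|//]; rewrite (negbTE a0). Qed.

Lemma eq0_of_mulf_r (K : idomainType) (a b : K) : b != 0 -> a * b = 0 -> a = 0.
Proof. by move=> b0 /mulf_eq0_or [//|/eqP]; rewrite (negbTE b0). Qed.

Lemma eq_of_mulf_div (K : fieldType) (x D N M : K) :
  D != 0 -> x * D = N -> N / D = M -> x = M.
Proof. by move=> D0 <- <-; rewrite mulfK. Qed.

Lemma eq_of_sub_eq (K : pzRingType) (c x y u v : K) :
  x = y -> u - v = c * (x - y) -> u = v.
Proof. by move=> -> e; apply/subr0_eq; rewrite e subrr mulr0. Qed.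

Definition tern_cubic_fun (K : comNzRingType) (d1 d2 d3 d4 d5 d6 d7 x y z : K) : K :=
  d1 * x ^+ 2 * y + d2 * x ^+ 2 * z + d3 * x * y ^+ 2 + d4 * x * z ^+ 2
  + d5 * y ^+ 2 * z + d6 * y * z ^+ 2 + d7 * x * y * z.

Definition spohn_form (K : comNzRingType) (p q r u w s : K) : K -> K -> K -> K :=
  tern_cubic_fun ((p + r) * u) (p * (w + s - u)) (q * u) (p * w) (q * s)
    ((q - r) * w) ((q - r) * (w + s - u) + (p + r) * s).

(* The k-th alternative is condition (k) of the theorem in the coordinates of
   [spohn_form]. Those of (9)-(12) are the 2x2 minors (or sums of them)
   expressing that (p, q, r) is linearly dependent with (-u, w, w + s),
   (-w, u, u - s), (s - u, w + s, w) and (-(w + s), u - s, u) respectively. *)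
Definition spohn_conds (K : comNzRingType) (p q r u w s : K) : Prop :=
  p + r - q = 0 \/ p = 0 \/ r = 0 \/ u = 0 \/ s - u = 0 \/ w + s = 0 \/
  (q = 0 /\ w = 0) \/ (q - r = 0 /\ s = 0) \/
  (- (q * w) - q * s + r * w = 0 /\ p * w + p * s + r * u = 0 /\
   p * w + q * u - q * w - q * s + r * w = 0) \/
  (- (p * s) - q * w + r * w = 0 /\ q * u - q * s - r * u = 0 /\
   p * u - p * s + r * w = 0) \/
  (q * w - r * w - r * s = 0 /\ p * w + r * u - r * s = 0 /\
   p * w + p * s + q * u - q * w - q * s + r * w + r * s = 0) \/
  (- (p * s) + q * w + q * s - r * w - r * s = 0 /\ q * u - r * u + r * s = 0 /\
   p * u - p * s + q * w + q * s = 0).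

(** * Restriction of the form to a plane *)

Section PlaneSections.

Variables (K : idomainType) (p q r u w s : K).
Hypothesis two_neq0 : (2 : K) != 0.

Lemma spohn_conds_of_vanish_z0 :
  (forall x y, spohn_form p q r u w s x y 0 = 0) -> spohn_conds p q r u w s.
Proof.
move=> F0; have k1 := F0 1 1; have k2 := F0 1 (-1).
rewrite /spohn_form /tern_cubic_fun in k1 k2.
have e1 : (p + r) * u = 0.
  apply: eq0_of_mulf_l two_neq0 _.
  by apply: (lincomb2_eq0 (a:=1) (b:=-1) k1 k2); ring.
have e3 : q * u = 0.
  apply: eq0_of_mulf_l two_neq0 _.
  by apply: (lincomb2_eq0 (a:=1) (b:=1) k1 k2); ring.
case: (mulf_eq0_or e3) => [q0|u0]; last by do 3 right; left.
case: (mulf_eq0_or e1) => [pr0|u0]; last by do 3 right; left.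
by left; apply: (lincomb2_eq0 (a:=1) (b:=-1) pr0 q0); ring.
Qed.

Lemma spohn_conds_of_plane_y_coeffs t : t != 0 ->
  (p + r) * u * t + p * (w + s - u) = 0 ->
  q * s * t + (q - r) * w = 0 ->
  q * u * t ^+ 2 + ((q - r) * (w + s - u) + (p + r) * s) * t + p * w = 0 ->
  spohn_conds p q r u w s.
Proof.
move=> t0 a1 b2 a3.
have [su0|su0] := eqVneq (s - u) 0; first by do 4 right; left.
have [ws0|ws0] := eqVneq (w + s) 0; first by do 5 right; left.
(* Cofactors found by elimination; the resulting multiple of p factors. *)
have elim_t : ((s - u) * (w + s) * t * (t - 1) * (u * t + w)) * p = 0.
  apply: (lincomb3_eq0 (a:=(- u*w*t^+2 - u*s*t^+2 + w*s*t^+2 - w*s*t))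
            (b:=(- u^+2*t^+3 + u^+2*t^+2 - u*w*t^+2 - u*s*t^+2))
            (c:=(u*w*t + u*s*t^+2)) a1 b2 a3); ring.
case: (mulf_eq0_or elim_t) => [|p0]; last by right; left.
case/mulf_eq0_or => [/mulf_eq0_or [/mulf_eq0_or [/mulf_eq0_or [] | ] | t1] | ut_w].
- by move/eqP: su0.
- by move/eqP: ws0.
- by move/eqP: t0.
- have {}t1 : t = 1 by apply/eqP; rewrite -subr_eq0; apply/eqP.
  rewrite t1 in a1 b2 a3.
  do 8 right; left; split; last split.
  + by apply: (lincomb1_eq0 (a:=-1) b2); ring.
  + by apply: (lincomb1_eq0 (a:=1) a1); ring.
  + apply: (eq0_of_mulf_l ws0).
    by apply: (lincomb2_eq0 (a:=w) (b:=u-w-s) a1 b2); ring.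
have [u0|u0] := eqVneq u 0; first by do 3 right; left.
have w_ut : w = - (u * t) by apply/eqP; rewrite -subr_eq0 opprK addrC; apply/eqP.
subst w; do 9 right; left; split; last split.
- apply: (eq0_of_mulf_l su0).
  by apply: (lincomb2_eq0 (a:=-s) (b:=u) a1 b2); ring.
- by apply: (eq0_of_mulf_l t0); apply: (lincomb1_eq0 (a:=-1) b2); ring.
- by apply: (lincomb1_eq0 (a:=-1) a1); ring.
Qed.

Lemma spohn_conds_of_vanish_y t :
  (forall x z, spohn_form p q r u w s x (t * z) z = 0) -> spohn_conds p q r u w s.
Proof.
move=> Ft; have k0 := Ft 0 1; have k1 := Ft 1 1; have k2 := Ft (-1) 1.
rewrite /spohn_form /tern_cubic_fun in k0 k1 k2.
have a2 : q * s * t ^+ 2 + (q - r) * w * t = 0.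
  by apply: (lincomb1_eq0 (a:=1) k0); ring.
have a1 : (p + r) * u * t + p * (w + s - u) = 0.
  apply: eq0_of_mulf_l two_neq0 _.
  by apply: (lincomb3_eq0 (a:=1) (b:=1) (c:=-2) k1 k2 a2); ring.
have a3 : q * u * t ^+ 2 + ((q - r) * (w + s - u) + (p + r) * s) * t + p * w = 0.
  apply: eq0_of_mulf_l two_neq0 _.
  by apply: (lincomb2_eq0 (a:=1) (b:=-1) k1 k2); ring.
have [t0|t0] := eqVneq t 0; last first.
  apply: (spohn_conds_of_plane_y_coeffs t0 a1 _ a3).
  by apply: (eq0_of_mulf_l t0); apply: (lincomb1_eq0 (a:=1) a2); ring.
rewrite t0 in a1 a3.
have e2 : p * (w + s - u) = 0 by apply: (lincomb1_eq0 (a:=1) a1); ring.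
have e4 : p * w = 0 by apply: (lincomb1_eq0 (a:=1) a3); ring.
case: (mulf_eq0_or e4) => [p0|w0]; first by right; left.
case: (mulf_eq0_or e2) => [p0|wsu0]; first by right; left.
by do 4 right; left; apply: (lincomb2_eq0 (a:=1) (b:=-1) wsu0 w0); ring.
Qed.

Lemma spohn_conds_of_plane_x_b0 g : g != 0 ->
  g * (p * (w + s - u) * g - p * w) = 0 ->
  - q * u * g + q * s = 0 ->
  (p + r) * u * g ^+ 2 - ((q - r) * (w + s - u) + (p + r) * s) * g
    + (q - r) * w = 0 ->
  spohn_conds p q r u w s.
Proof.
move=> g0 e2 e3 e4.
have hH : p * ((w + s - u) * g - w) = 0.
  by apply: (eq0_of_mulf_l g0); apply: (lincomb1_eq0 (a:=1) e2); ring.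
case: (mulf_eq0_or hH) => [p0|wsu_g]; first by right; left.
have e3' : q * (s - u * g) = 0 by apply: (lincomb1_eq0 (a:=1) e3); ring.
have e4' : (p + r) * g * (u * g - s) = 0.
  by apply: (lincomb2_eq0 (a:=1) (b:=q-r) e4 wsu_g); ring.
have [ug_s|ug_s] := eqVneq (u * g - s) 0.
  have : (g - 1) * (w + s) = 0.
    by apply: (lincomb2_eq0 (a:=1) (b:=1) wsu_g ug_s); ring.
  case/mulf_eq0_or => [g1|ws0]; last by do 5 right; left.
  by do 4 right; left; apply: (lincomb2_eq0 (a:=-1) (b:=u) ug_s g1); ring.
have q0 : q = 0.
  apply: (eq0_of_mulf_r (b:=s-u*g)) e3'.
  by apply: contra ug_s => /eqP h; apply/eqP; apply: (lincomb1_eq0 (a:=-1) h); ring.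
have pr0 : p + r = 0 by apply: (eq0_of_mulf_r g0); apply: (eq0_of_mulf_r ug_s).
by left; apply: (lincomb2_eq0 (a:=1) (b:=-1) pr0 q0); ring.
Qed.

Lemma spohn_conds_of_plane_x_g0 b : b != 0 ->
  b * ((p + r) * u * b - q * u) = 0 ->
  p * (w + s - u) * b ^+ 2 - ((q - r) * (w + s - u) + (p + r) * s) * b + q * s = 0 ->
  - p * w * b + (q - r) * w = 0 ->
  spohn_conds p q r u w s.
Proof.
move=> b0 e1 e3 e4.
have : u * ((p + r) * b - q) = 0.
  by apply: (eq0_of_mulf_l b0); apply: (lincomb1_eq0 (a:=1) e1); ring.
case/mulf_eq0_or => [u0|prb_q]; first by do 3 right; left.
have : w * (q - r - p * b) = 0 by apply: (lincomb1_eq0 (a:=1) e4); ring.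
case/mulf_eq0_or => [w0|qrpb].
  have : r * (s - u) * b * (1 - b) = 0.
    by apply: (lincomb3_eq0 (a:=1) (b:=u*b - w*b - w - s*b + s)
                 (c:=p*b - q + r*b^+2) e3 prb_q w0); ring.
  case/mulf_eq0_or => [/mulf_eq0_or [/mulf_eq0_or [r0|su0]|/eqP]|b1].
  - by do 2 right; left.
  - by do 4 right; left.
  - by rewrite (negbTE b0).
  - by left; apply: (lincomb2_eq0 (a:=1) (b:=p+r) prb_q b1); ring.
have : r * (b - 1) = 0 by apply: (lincomb2_eq0 (a:=1) (b:=1) prb_q qrpb); ring.
case/mulf_eq0_or => [r0|b1]; first by do 2 right; left.
by left; apply: (lincomb2_eq0 (a:=1) (b:=-(p+r)) prb_q b1); ring.
Qed.

Lemma spohn_conds_of_plane_x_bg b g : b != 0 -> g != 0 ->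
  b * ((p + r) * u * b - q * u) = 0 ->
  g * (p * (w + s - u) * g - p * w) = 0 ->
  2 * (p + r) * u * b * g + p * (w + s - u) * b ^+ 2 - q * u * g
    - ((q - r) * (w + s - u) + (p + r) * s) * b + q * s = 0 ->
  (p + r) * u * g ^+ 2 + 2 * p * (w + s - u) * b * g - p * w * b
    - ((q - r) * (w + s - u) + (p + r) * s) * g + (q - r) * w = 0 ->
  spohn_conds p q r u w s.
Proof.
move=> b0 g0 e1 e2 e3 e4.
have : u * ((p + r) * b - q) = 0.
  by apply: (eq0_of_mulf_l b0); apply: (lincomb1_eq0 (a:=1) e1); ring.
case/mulf_eq0_or => [u0|prb_q]; first by do 3 right; left.
have : p * ((w + s - u) * g - w) = 0.
  by apply: (eq0_of_mulf_l g0); apply: (lincomb1_eq0 (a:=1) e2); ring.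
case/mulf_eq0_or => [p0|wsu_g]; first by right; left.
have q_prb : q = (p + r) * b by apply/eqP; rewrite eq_sym -subr_eq0; apply/eqP.
subst q.
have hX : (p + r) * u * g - r * (w + s - u) * (b - 1) = 0.
  by apply: (eq0_of_mulf_l b0); apply: (lincomb1_eq0 (a:=1) e3); ring.
have hY : (p + r) * u * (g - 1) + p * (w + s - u) * (b + g - 1)
          + r * (w + s - u) * (g - 1) = 0.
  apply: (eq0_of_mulf_l g0).
  by apply: (lincomb2_eq0 (a:=1) (b:=p*g + r*b + r*g - r) e4 wsu_g); ring.
have : ((p + r) * g - r) * ((p + r) * u + r * (w + s - u)) = 0.
  by apply: (lincomb2_eq0 (a:=r) (b:=p) hY hX); ring.
case/mulf_eq0_or => [hP|hQ].
  have : r * (u - (w + s - u) * (b - 1)) = 0.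
    by apply: (lincomb2_eq0 (a:=1) (b:=-u) hX hP); ring.
  case/mulf_eq0_or => [r0|hR]; first by do 2 right; left.
  do 10 right; left; split; last split.
  - by apply: (lincomb3_eq0 (a:=-p*b - r*b) (b:=- u*b + w*b + s*b) (c:=-r)
                 wsu_g hP hR); ring.
  - by apply: (lincomb3_eq0 (a:=-p - r) (b:=- u + w + s) (c:=0) wsu_g hP hR); ring.
  - by apply: (lincomb3_eq0 (a:=0) (b:=0) (c:=p + r) wsu_g hP hR); ring.
have : r * (w + s - u) * (b + g - 1) = 0.
  by apply: (lincomb2_eq0 (a:=g) (b:=-1) hQ hX); ring.
case/mulf_eq0_or => [/mulf_eq0_or [r0|wsu0]|hS]; first by do 2 right; left.
  have w0 : w = 0 by apply: (lincomb2_eq0 (a:=g) (b:=-1) wsu0 wsu_g); ring.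
  have : (p + r) * u = 0 by apply: (lincomb2_eq0 (a:=1) (b:=-r) hQ wsu0); ring.
  case/mulf_eq0_or => [pr0|u0]; last by do 3 right; left.
  by left; apply: (lincomb1_eq0 (a:=1-b) pr0); ring.
do 11 right; split; last split.
- by apply: (lincomb3_eq0 (a:=-p) (b:=b-1) (c:=- p*u + p*w + p*s) wsu_g hQ hS); ring.
- by apply: (lincomb3_eq0 (a:=r) (b:=- g + 1) (c:=p*u + r*u) wsu_g hQ hS); ring.
- by apply: (lincomb3_eq0 (a:=-p) (b:=b) (c:=- p*u + p*w + p*s) wsu_g hQ hS); ring.
Qed.

Lemma spohn_conds_of_vanish_x b g :
  (forall y z, spohn_form p q r u w s (- (b * y + g * z)) y z = 0) ->
  spohn_conds p q r u w s.
Proof.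
move=> Fbg; have k10 := Fbg 1 0; have k01 := Fbg 0 1.
have k11 := Fbg 1 1; have k1m := Fbg 1 (-1).
rewrite /spohn_form /tern_cubic_fun in k10 k01 k11 k1m.
have e1 : b * ((p + r) * u * b - q * u) = 0.
  by apply: (lincomb1_eq0 (a:=1) k10); ring.
have e2 : g * (p * (w + s - u) * g - p * w) = 0.
  by apply: (lincomb1_eq0 (a:=1) k01); ring.
have e4 : (p + r) * u * g ^+ 2 + 2 * p * (w + s - u) * b * g - p * w * b
          - ((q - r) * (w + s - u) + (p + r) * s) * g + (q - r) * w = 0.
  apply: eq0_of_mulf_l two_neq0 _.
  by apply: (lincomb3_eq0 (a:=1) (b:=1) (c:=-2) k11 k1m e1); ring.
have e3 : 2 * (p + r) * u * b * g + p * (w + s - u) * b ^+ 2 - q * u * g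
          - ((q - r) * (w + s - u) + (p + r) * s) * b + q * s = 0.
  apply: eq0_of_mulf_l two_neq0 _.
  by apply: (lincomb3_eq0 (a:=1) (b:=-1) (c:=-2) k11 k1m e2); ring.
have [b0|b0] := eqVneq b 0; have [g0|g0] := eqVneq g 0.
- subst b g.
  have : q * s = 0 by apply: (lincomb1_eq0 (a:=1) e3); ring.
  have : (q - r) * w = 0 by apply: (lincomb1_eq0 (a:=1) e4); ring.
  case/mulf_eq0_or => [qr0|w0]; case/mulf_eq0_or => [q0|s0].
  + by do 2 right; left; apply: (lincomb2_eq0 (a:=1) (b:=-1) q0 qr0); ring.
  + by do 7 right; left.
  + by do 6 right; left.
  + by do 5 right; left; apply: (lincomb2_eq0 (a:=1) (b:=1) w0 s0); ring.
- subst b; apply: (spohn_conds_of_plane_x_b0 g0 e2).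
  + by apply: (lincomb1_eq0 (a:=1) e3); ring.
  + by apply: (lincomb1_eq0 (a:=1) e4); ring.
- subst g; apply: (spohn_conds_of_plane_x_g0 b0 e1).
  + by apply: (lincomb1_eq0 (a:=1) e3); ring.
  + by apply: (lincomb1_eq0 (a:=1) e4); ring.
- exact: spohn_conds_of_plane_x_bg b0 g0 e1 e2 e3 e4.
Qed.

End PlaneSections.

Lemma spohn_conds_of_vanish_plane (K : fieldType) (p q r u w s al be ga : K) :
  (2 : K) != 0 -> [|| al != 0, be != 0 | ga != 0] ->
  (forall x y z, al * x + be * y + ga * z = 0 -> spohn_form p q r u w s x y z = 0) ->
  spohn_conds p q r u w s.
Proof.
move=> two_neq0 nz F0.
have [al0|al0] := eqVneq al 0; last first.
  apply: (spohn_conds_of_vanish_x two_neq0 (b := be / al) (g := ga / al)) => y z.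
  by apply: F0; field.
have [be0|be0] := eqVneq be 0.
  apply: (spohn_conds_of_vanish_z0 two_neq0) => x y.
  by apply: F0; rewrite al0 be0; ring.
apply: (spohn_conds_of_vanish_y two_neq0 (t := - ga / be)) => x z.
by apply: F0; rewrite al0; field.
Qed.

(* For [L x = 0] and [L u = 1], the point [x + k u] (k != 0) rescales by
   [- a0 / k] onto the affine plane [a0 + L = 0]; as [F (x + k u)] is cubic in
   [k], its vanishing at k = 1, ..., 4 forces it at k = 0. *)
Lemma cubic_vanish_plane_of_affine (K : numFieldType) (F : K -> K -> K -> K)
    (a0 al be ga : K) :
  (forall x y z k, F (k * x) (k * y) (k * z) = k ^+ 3 * F x y z) ->
  (forall x y z ux uy uz, F x y z = 4 * F (x + 1 * ux) (y + 1 * uy) (z + 1 * uz)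
      - 6 * F (x + 2 * ux) (y + 2 * uy) (z + 2 * uz)
      + 4 * F (x + 3 * ux) (y + 3 * uy) (z + 3 * uz)
      - F (x + 4 * ux) (y + 4 * uy) (z + 4 * uz)) ->
  (forall x y z, a0 + al * x + be * y + ga * z = 0 -> F x y z = 0) ->
  a0 != 0 -> [|| al != 0, be != 0 | ga != 0] ->
  forall x y z, al * x + be * y + ga * z = 0 -> F x y z = 0.
Proof.
move=> F_homog F_diff4 F0 a0_neq0 nz x y z L0.
have [ux [uy [uz L1]]] : exists ux uy uz, al * ux + be * uy + ga * uz = 1.
  case/or3P: nz => h; [exists al^-1, 0, 0 | exists 0, be^-1, 0 | exists 0, 0, ga^-1];
    field; exact: h.
have Fk (k : K) : k != 0 -> F (x + k * ux) (y + k * uy) (z + k * uz) = 0.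
  move=> k0; have c0 : (- a0 / k) ^+ 3 != 0.
    by rewrite expf_neq0 // mulf_neq0 ?oppr_eq0 ?invr_eq0.
  apply: (eq0_of_mulf_l c0); rewrite -F_homog; apply: F0.
  rewrite (_ : a0 + _ + _ + _ = a0 + (- a0 / k) * (al * x + be * y + ga * z)
              + (- a0 / k) * k * (al * ux + be * uy + ga * uz)); last by ring.
  by rewrite L0 L1; field.
by rewrite (F_diff4 x y z ux uy uz) !Fk ?oner_neq0 ?pnatr_eq0 //; ring.
Qed.

(** * Reducible ternary cubics vanish on a plane *)

Lemma msize_dhomog (K : fieldType) n (f : {mpoly K[n]}) d :
  f != 0 -> f \is d.-homog -> msize f = d.+1.
Proof.
move=> f0 fd; have -> := dhomog_uniq f0 fd (dhomog_msize fd).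
by rewrite prednK // lt0n msize_poly_eq0.
Qed.

Lemma reducible_of_dhomog_factor (K : fieldType) n (f g h : {mpoly K[n]}) d e :
  f != 0 -> f \is d.-homog -> g \is e.-homog -> (0 < e < d)%N -> f = g * h ->
  mpoly_reducible f.
Proof.
move=> f0 fd ge /andP [e_gt0 e_lt_d] E; split=> //; exists g, h.
have g0 : g != 0 by apply: contra f0; rewrite E => /eqP ->; rewrite mul0r.
have h0 : h != 0 by apply: contra f0; rewrite E => /eqP ->; rewrite mulr0.
have sz := msizeM g0 h0.
rewrite -E (msize_dhomog f0 fd) (msize_dhomog g0 ge) in sz.
split=> //; first by rewrite (msize_dhomog g0 ge).
by move: sz e_lt_d; set m := msize h; rewrite -subn1; clear; lia.
Qed.

Lemma reducible_dhomog3_linear_factor (K : fieldType) n (f : {mpoly K[n]}) :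
  f \is 3.-homog -> mpoly_reducible f -> exists g h, msize g = 2 /\ f = g * h.
Proof.
move=> f3 [f0 [g [h [g_gt1 h_gt1 E]]]].
have g0 : g != 0 by apply: contra f0; rewrite E => /eqP ->; rewrite mul0r.
have h0 : h != 0 by apply: contra f0; rewrite E => /eqP ->; rewrite mulr0.
have := msizeM g0 h0; rewrite -E (msize_dhomog f0 f3) => gh.
have [g2|g2] := eqVneq (msize g) 2; first by exists g, h.
exists h, g; split; last by rewrite mulrC.
move/eqP: g2; move: gh g_gt1 h_gt1; set mg := msize g; set mh := msize h.
by rewrite -subn1; clear; lia.
Qed.

Lemma msize2_mpolyE (K : fieldType) n (g : {mpoly K[n]}) : (msize g <= 2)%N ->
  g = (g@_0)%:MP + \sum_(i < n) g@_U_(i) *: 'X_i.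
Proof.
move=> g_le2; apply/mpolyP => m.
rewrite mcoeffD mcoeffC raddf_sum /=.
under eq_bigr => i _ do rewrite mcoeffZ mcoeffX.
have [->|m0] := eqVneq m 0%MM.
  by rewrite mulr1 big1 ?addr0 // => i _; rewrite mnm1_eq0 mulr0.
rewrite mulr0 add0r.
have [/mdeg1P [j /eqP ->]|m_ne1] := boolP (mdeg m == 1%N).
  rewrite (bigD1 j) //= eqxx mulr1 big1 ?addr0 // => i ij.
  by rewrite eq_mnm1 (negbTE ij) mulr0.
rewrite big1; last first.
  move=> i _; rewrite (_ : (U_(i) == m)%MM = false) ?mulr0 //.
  by apply/negbTE; apply: contra m_ne1 => /eqP <-; rewrite mdeg1.
apply: memN_msupp_eq0; apply: msize_mdeg_ge; apply: (leq_trans g_le2).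
by move: m0 m_ne1; rewrite -mdeg_eq0; case: (mdeg m) => [|[|]].
Qed.

Definition vec3 (K : nzRingType) (x y z : K) : 'I_3 -> K :=
  fun i => nth 0 [:: x; y; z] i.

Section TernaryForms.

Variable R : realType.

Definition mconst (c : R) : {mpoly R[i][3]} := ((c%:C)%C)%:MP.
Definition mvar (k : nat) : {mpoly R[i][3]} := 'X_(inord k).

Definition tern_cubic (d1 d2 d3 d4 d5 d6 d7 : R) : {mpoly R[i][3]} :=
  mconst d1 * mvar 0 ^+ 2 * mvar 1 + mconst d2 * mvar 0 ^+ 2 * mvar 2
  + mconst d3 * mvar 0 * mvar 1 ^+ 2 + mconst d4 * mvar 0 * mvar 2 ^+ 2
  + mconst d5 * mvar 1 ^+ 2 * mvar 2 + mconst d6 * mvar 1 * mvar 2 ^+ 2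
  + mconst d7 * mvar 0 * mvar 1 * mvar 2.

Definition tern_linear (l1 l2 l3 : R) : {mpoly R[i][3]} :=
  mconst l1 * mvar 0 + mconst l2 * mvar 1 + mconst l3 * mvar 2.

Definition tern_quadratic (q1 q2 q3 q4 q5 q6 : R) : {mpoly R[i][3]} :=
  mconst q1 * mvar 0 ^+ 2 + mconst q2 * mvar 1 ^+ 2 + mconst q3 * mvar 2 ^+ 2
  + mconst q4 * mvar 0 * mvar 1 + mconst q5 * mvar 0 * mvar 2
  + mconst q6 * mvar 1 * mvar 2.

Lemma mconstD (a b : R) : mconst (a + b) = mconst a + mconst b.
Proof. by rewrite /mconst !rmorphD. Qed.

Lemma mconstM (a b : R) : mconst (a * b) = mconst a * mconst b.
Proof. by rewrite /mconst !rmorphM. Qed.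

Lemma mconst0 : mconst 0 = 0.
Proof. by rewrite /mconst !rmorph0. Qed.

Lemma mconst_homog (c : R) : mconst c \is 0.-homog.
Proof. by rewrite /mconst -[_%:MP]mulr1 mul_mpolyC; apply/dhomogZ/dhomog1. Qed.

Lemma mvar_homog k : mvar k \is 1.-homog.
Proof. by rewrite /mvar dhomogX; apply/eqP; exact: mdeg1. Qed.

Lemma tern_cubic_homog (d1 d2 d3 d4 d5 d6 d7 : R) :
  tern_cubic d1 d2 d3 d4 d5 d6 d7 \is 3.-homog.
Proof.
have X2 k : mvar k ^+ 2 \is 2.-homog by exact: dhomogMn 2 (mvar_homog k).
have C1 c k : mconst c * mvar k \is 1.-homog.
  exact: dhomogM (mconst_homog c) (mvar_homog k).
have C2 c k : mconst c * mvar k ^+ 2 \is 2.-homog.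
  exact: dhomogM (mconst_homog c) (X2 k).
have C11 c k l : mconst c * mvar k * mvar l \is 2.-homog.
  exact: dhomogM (C1 c k) (mvar_homog l).
rewrite /tern_cubic !rpredD //.
all: by first [exact: dhomogM (C2 _ _) (mvar_homog _) | exact: dhomogM (C1 _ _) (X2 _)
             | exact: dhomogM (C11 _ _ _) (mvar_homog _)].
Qed.

Lemma tern_linear_homog (l1 l2 l3 : R) : tern_linear l1 l2 l3 \is 1.-homog.
Proof.
have C1 c k : mconst c * mvar k \is 1.-homog.
  exact: dhomogM (mconst_homog c) (mvar_homog k).
by rewrite /tern_linear !rpredD ?C1.
Qed.

Lemma tern_cubic_factor (l1 l2 l3 q1 q2 q3 q4 q5 q6 d1 d2 d3 d4 d5 d6 d7 : R) :
  l1 * q1 = 0 -> l2 * q2 = 0 -> l3 * q3 = 0 ->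
  l1 * q4 + l2 * q1 = d1 -> l1 * q5 + l3 * q1 = d2 -> l1 * q2 + l2 * q4 = d3 ->
  l1 * q3 + l3 * q5 = d4 -> l2 * q6 + l3 * q2 = d5 -> l2 * q3 + l3 * q6 = d6 ->
  l1 * q6 + l2 * q5 + l3 * q4 = d7 ->
  tern_cubic d1 d2 d3 d4 d5 d6 d7
  = tern_linear l1 l2 l3 * tern_quadratic q1 q2 q3 q4 q5 q6.
Proof.
move=> h1 h2 h3 <- <- <- <- <- <- <-.
set d := tern_cubic _ _ _ _ _ _ _.
have -> : d = d + mconst (l1 * q1) * mvar 0 ^+ 3 + mconst (l2 * q2) * mvar 1 ^+ 3
              + mconst (l3 * q3) * mvar 2 ^+ 3.
  by rewrite h1 h2 h3 mconst0 !mul0r !addr0.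
rewrite /d /tern_cubic /tern_linear /tern_quadratic !(mconstD, mconstM); ring.
Qed.

Lemma tern_cubic_reducible (l1 l2 l3 q1 q2 q3 q4 q5 q6 d1 d2 d3 d4 d5 d6 d7 : R) :
  tern_cubic d1 d2 d3 d4 d5 d6 d7 != 0 ->
  l1 * q1 = 0 -> l2 * q2 = 0 -> l3 * q3 = 0 ->
  l1 * q4 + l2 * q1 = d1 -> l1 * q5 + l3 * q1 = d2 -> l1 * q2 + l2 * q4 = d3 ->
  l1 * q3 + l3 * q5 = d4 -> l2 * q6 + l3 * q2 = d5 -> l2 * q3 + l3 * q6 = d6 ->
  l1 * q6 + l2 * q5 + l3 * q4 = d7 ->
  mpoly_reducible (tern_cubic d1 d2 d3 d4 d5 d6 d7).
Proof.
move=> nz h1 h2 h3 h4 h5 h6 h7 h8 h9 h10.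
apply: (reducible_of_dhomog_factor (h := tern_quadratic q1 q2 q3 q4 q5 q6) nz
          (tern_cubic_homog _ _ _ _ _ _ _) (tern_linear_homog l1 l2 l3)
          (isT : (0 < 1 < 3)%N)).
exact: tern_cubic_factor.
Qed.

Lemma tern_cubic_eval (d1 d2 d3 d4 d5 d6 d7 : R) (x y z : R[i]) :
  (tern_cubic d1 d2 d3 d4 d5 d6 d7).@[vec3 x y z]
  = tern_cubic_fun (d1%:C)%C (d2%:C)%C (d3%:C)%C (d4%:C)%C (d5%:C)%C (d6%:C)%C
      (d7%:C)%C x y z.
Proof.
rewrite /tern_cubic /mconst /mvar.
by rewrite !(mevalD, mevalM, mevalC, mevalXU, rmorphXn) /vec3 /= !inordK.
Qed.

Lemma tern_cubic_congr (d1 d2 d3 d4 d5 d6 d7 e1 e2 e3 e4 e5 e6 e7 : R) :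
  d1 = e1 -> d2 = e2 -> d3 = e3 -> d4 = e4 -> d5 = e5 -> d6 = e6 -> d7 = e7 ->
  tern_cubic d1 d2 d3 d4 d5 d6 d7 = tern_cubic e1 e2 e3 e4 e5 e6 e7.
Proof. by move=> -> -> -> -> -> -> ->. Qed.

Definition spohn_mpoly (p q r u w s : R) : {mpoly R[i][3]} :=
  tern_cubic ((p + r) * u) (p * (w + s - u)) (q * u) (p * w) (q * s)
    ((q - r) * w) ((q - r) * (w + s - u) + (p + r) * s).

End TernaryForms.

Lemma meval_msize2_vec3 (K : fieldType) (g : {mpoly K[3]}) (x y z : K) :
  (msize g <= 2)%N ->
  g.@[vec3 x y z] = g@_0 + g@_U_(ord0) * x + g@_U_(lift ord0 ord0) * y
                    + g@_U_(lift ord0 (lift ord0 ord0)) * z.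
Proof.
move=> g_le2; rewrite {1}(msize2_mpolyE g_le2) mevalD mevalC raddf_sum /=.
by rewrite !big_ord_recl big_ord0 !mevalZ !mevalXU /vec3 /= !addrA addr0.
Qed.

Lemma msize2_linear_coef3 (K : fieldType) (g : {mpoly K[3]}) : msize g = 2 ->
  [|| g@_U_(ord0) != 0, g@_U_(lift ord0 ord0) != 0
    | g@_U_(lift ord0 (lift ord0 ord0)) != 0].
Proof.
move=> g2; apply: contraT.
move=> /norP [/negbNE/eqP c0 /norP [/negbNE/eqP c1 /negbNE/eqP c2]].
have g_le2 : (msize g <= 2)%N by rewrite g2.
move: g2; rewrite (msize2_mpolyE g_le2) !big_ord_recl big_ord0 c0 c1 c2.
by rewrite !scale0r !addr0 msizeC; case: (_ != 0).
Qed.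

Lemma tern_cubic_vanish_plane (R : realType) (d1 d2 d3 d4 d5 d6 d7 : R) :
  mpoly_reducible (tern_cubic d1 d2 d3 d4 d5 d6 d7) ->
  exists al be ga : R[i], [|| al != 0, be != 0 | ga != 0] /\
    forall x y z, al * x + be * y + ga * z = 0 ->
    tern_cubic_fun (d1%:C)%C (d2%:C)%C (d3%:C)%C (d4%:C)%C (d5%:C)%C (d6%:C)%C
      (d7%:C)%C x y z = 0.
Proof.
move=> /(reducible_dhomog3_linear_factor (tern_cubic_homog _ _ _ _ _ _ _)).
move=> [g [h [g2 E]]]; have g_le2 : (msize g <= 2)%N by rewrite g2.
set F := tern_cubic_fun _ _ _ _ _ _ _.
have F_factor x y z : F x y z = (g@_0 + g@_U_(ord0) * x + g@_U_(lift ord0 ord0) * y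
    + g@_U_(lift ord0 (lift ord0 ord0)) * z) * h.@[vec3 x y z].
  by rewrite -meval_msize2_vec3 // -mevalM -E tern_cubic_eval.
exists g@_U_(ord0), g@_U_(lift ord0 ord0), g@_U_(lift ord0 (lift ord0 ord0)).
split; first exact: msize2_linear_coef3.
have [g00|g0_neq0] := eqVneq g@_0 0.
  by move=> x y z L0; rewrite F_factor g00 add0r L0 mul0r.
apply: (cubic_vanish_plane_of_affine _ _ _ g0_neq0 (msize2_linear_coef3 g2)).
- by move=> x y z k; rewrite /F /tern_cubic_fun; ring.
- by move=> x y z ux uy uz; rewrite /F /tern_cubic_fun; ring.
- by move=> x y z L0; rewrite F_factor L0 mul0r.
Qed.

(** * Explicit factorizations *)

Section SpohnFactorizations.

Variables (R : realType) (p q r u w s : R).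

Let f := spohn_mpoly p q r u w s.

Lemma spohn_reducible1 : f != 0 -> p + r - q = 0 -> mpoly_reducible f.
Proof.
move=> nz /subr0_eq q_pr; rewrite /f -q_pr in nz *.
by apply: (tern_cubic_reducible (l1:=1) (l2:=1) (l3:=0) (q1:=0) (q2:=0) (q3:=p*w)
  (q4:=p*u + r*u) (q5:=- p*u + p*w + p*s) (q6:=p*s + r*s) nz); ring.
Qed.

Lemma spohn_reducible2 : f != 0 -> p = 0 -> mpoly_reducible f.
Proof.
move=> nz p0; rewrite /f p0 in nz *.
by apply: (tern_cubic_reducible (l1:=0) (l2:=1) (l3:=0) (q1:=r*u) (q2:=0)
  (q3:=q*w - r*w) (q4:=q*u) (q5:=- q*u + q*w + q*s + r*u - r*w) (q6:=q*s) nz); ring.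
Qed.

Lemma spohn_reducible3 : f != 0 -> r = 0 -> mpoly_reducible f.
Proof.
move=> nz r0; rewrite /f r0 in nz *.
by apply: (tern_cubic_reducible (l1:=p) (l2:=q) (l3:=0) (q1:=0) (q2:=0) (q3:=w)
  (q4:=u) (q5:=- u + w + s) (q6:=s) nz); ring.
Qed.

Lemma spohn_reducible4 : f != 0 -> u = 0 -> mpoly_reducible f.
Proof.
move=> nz u0; rewrite /f u0 in nz *.
by apply: (tern_cubic_reducible (l1:=0) (l2:=0) (l3:=1) (q1:=p*w + p*s) (q2:=q*s)
  (q3:=0) (q4:=p*s + q*w + q*s - r*w) (q5:=p*w) (q6:=q*w - r*w) nz); ring.
Qed.

Lemma spohn_reducible5 : f != 0 -> s - u = 0 -> mpoly_reducible f.
Proof.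
move=> nz /subr0_eq s_u; rewrite /f s_u in nz *.
by apply: (tern_cubic_reducible (l1:=1) (l2:=0) (l3:=1) (q1:=0) (q2:=q*u) (q3:=0)
  (q4:=p*u + r*u) (q5:=p*w) (q6:=q*w - r*w) nz); ring.
Qed.

Lemma spohn_reducible6 : f != 0 -> w + s = 0 -> mpoly_reducible f.
Proof.
move=> nz ws0; have w_s : w = - s by apply: subr0_eq; rewrite opprK.
rewrite /f w_s in nz *.
by apply: (tern_cubic_reducible (l1:=u) (l2:=0) (l3:=s) (q1:=0) (q2:=q) (q3:=0)
  (q4:=p + r) (q5:=- p) (q6:=- q + r) nz); ring.
Qed.

Lemma spohn_reducible7 : f != 0 -> q = 0 /\ w = 0 -> mpoly_reducible f.
Proof.
move=> nz [q0 w0]; rewrite /f q0 w0 in nz *.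
by apply: (tern_cubic_reducible (l1:=1) (l2:=0) (l3:=0) (q1:=0) (q2:=0) (q3:=0)
  (q4:=(p + r) * u) (q5:=p * (s - u)) (q6:=- r * (s - u) + (p + r) * s) nz); ring.
Qed.

Lemma spohn_reducible8 : f != 0 -> q - r = 0 /\ s = 0 -> mpoly_reducible f.
Proof.
move=> nz [/subr0_eq q_r s0]; rewrite /f q_r s0 in nz *.
by apply: (tern_cubic_reducible (l1:=1) (l2:=0) (l3:=0) (q1:=0) (q2:=r*u)
  (q3:=p*w) (q4:=(p + r) * u) (q5:=p * (w - u)) (q6:=0) nz); ring.
Qed.

Lemma spohn_reducible9 : f != 0 ->
  - (q * w) - q * s + r * w = 0 /\ p * w + p * s + r * u = 0 /\
  p * w + q * u - q * w - q * s + r * w = 0 ->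
  mpoly_reducible f.
Proof.
move=> nz [e1 [e2 _]].
have [ws0|ws0] := eqVneq (w + s) 0; first exact: spohn_reducible6.
pose h := r / (w + s).
have p_uh : p = - u * h.
  apply: (eq_of_mulf_div ws0 (N := - (r * u))); last by rewrite /h; field.
  by apply: subr0_eq; apply: (lincomb1_eq0 (a:=1) e2); ring.
have q_wh : q = w * h.
  apply: (eq_of_mulf_div ws0 (N := r * w)); last by rewrite /h; field.
  by apply: subr0_eq; apply: (lincomb1_eq0 (a:=-1) e1); ring.
have r_wsh : r = (w + s) * h by rewrite /h; field.
rewrite /f in nz *; clearbody h; subst p q r.
by apply: (tern_cubic_reducible (l1:=0) (l2:=1) (l3:=-1)
  (q1:=- u^+2*h + u*w*h + u*s*h) (q2:=0) (q3:=0) (q4:=u*w*h) (q5:=u*w*h)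
  (q6:=w*s*h) nz); ring.
Qed.

Lemma spohn_reducible10 : f != 0 ->
  - (p * s) - q * w + r * w = 0 /\ q * u - q * s - r * u = 0 /\
  p * u - p * s + r * w = 0 ->
  mpoly_reducible f.
Proof.
move=> nz [_ [e2 e3]].
have [us0|us0] := eqVneq (u - s) 0.
  by apply: spohn_reducible5 => //; apply: (lincomb1_eq0 (a:=-1) us0); ring.
pose h := r / (u - s).
have p_wh : p = - w * h.
  apply: (eq_of_mulf_div us0 (N := - (r * w))); last by rewrite /h; field.
  by apply: subr0_eq; apply: (lincomb1_eq0 (a:=1) e3); ring.
have q_uh : q = u * h.
  apply: (eq_of_mulf_div us0 (N := r * u)); last by rewrite /h; field.
  by apply: subr0_eq; apply: (lincomb1_eq0 (a:=1) e2); ring.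
have r_ush : r = (u - s) * h by rewrite /h; field.
rewrite /f in nz *; clearbody h; subst p q r.
by apply: (tern_cubic_reducible (l1:=0) (l2:=u) (l3:=w) (q1:=u*h - w*h - s*h)
  (q2:=0) (q3:=0) (q4:=u*h) (q5:=- w*h) (q6:=s*h) nz); ring.
Qed.

Lemma spohn_reducible11 : f != 0 ->
  q * w - r * w - r * s = 0 /\ p * w + r * u - r * s = 0 /\
  p * w + p * s + q * u - q * w - q * s + r * w + r * s = 0 ->
  mpoly_reducible f.
Proof.
move=> nz [e1 [e2 _]].
have [w0|w0] := eqVneq w 0.
  have rs0 : r * s = 0 by apply: (lincomb2_eq0 (a:=-1) (b:=q-r) e1 w0); ring.
  case: (mulf_eq0_or rs0) => [r0|s0]; first exact: spohn_reducible3.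
  have : r * u = 0 by apply: (lincomb3_eq0 (a:=1) (b:=1) (c:=-p) e2 rs0 w0); ring.
  by case/mulf_eq0_or => [r0|u0]; [exact: spohn_reducible3 | exact: spohn_reducible4].
pose h := r / w.
have p_suh : p = (s - u) * h.
  apply: (eq_of_mulf_div w0 (N := r * (s - u))); last by rewrite /h; field.
  by apply: subr0_eq; apply: (lincomb1_eq0 (a:=1) e2); ring.
have q_wsh : q = (w + s) * h.
  apply: (eq_of_mulf_div w0 (N := r * (w + s))); last by rewrite /h; field.
  by apply: subr0_eq; apply: (lincomb1_eq0 (a:=1) e1); ring.
have r_wh : r = w * h by rewrite /h; field.
rewrite /f in nz *; clearbody h; subst p q r.
by apply: (tern_cubic_reducible (l1:=w + s - u) (l2:=w + s) (l3:=w) (q1:=0) (q2:=0)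
  (q3:=0) (q4:=u*h) (q5:=- u*h + s*h) (q6:=s*h) nz); ring.
Qed.

Lemma spohn_reducible12 : f != 0 ->
  - (p * s) + q * w + q * s - r * w - r * s = 0 /\ q * u - r * u + r * s = 0 /\
  p * u - p * s + q * w + q * s = 0 ->
  mpoly_reducible f.
Proof.
move=> nz [_ [e2 e3]].
have [u0|u0] := eqVneq u 0; first exact: spohn_reducible4.
have [us0|us0] := eqVneq (u - s) 0.
  by apply: spohn_reducible5 => //; apply: (lincomb1_eq0 (a:=-1) us0); ring.
pose h := r / u.
have q_ush : q = (u - s) * h.
  apply: (eq_of_mulf_div u0 (N := r * (u - s))); last by rewrite /h; field.
  by apply: subr0_eq; apply: (lincomb1_eq0 (a:=1) e2); ring.
have p_wsh : p = - (w + s) * h.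
  apply: (eq_of_mulf_div u0 (N := - (r * (w + s)))); last by rewrite /h; field.
  apply: subr0_eq; apply: (eq0_of_mulf_l us0).
  by apply: (lincomb2_eq0 (a:=u) (b:=-(w+s)) e3 e2); ring.
have r_uh : r = u * h by rewrite /h; field.
rewrite /f in nz *; clearbody h; subst p q r.
by apply: (tern_cubic_reducible (l1:=w + s - u) (l2:=s - u) (l3:=w) (q1:=0) (q2:=0)
  (q3:=0) (q4:=- u*h) (q5:=- w*h - s*h) (q6:=- s*h) nz); ring.
Qed.

Lemma spohn_reducible : f != 0 -> spohn_conds p q r u w s -> mpoly_reducible f.
Proof.
move=> nz; case=> [|[|[|[|[|[|[|[|[|[|[|]]]]]]]]]]].
- exact: spohn_reducible1 nz.
- exact: spohn_reducible2 nz.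
- exact: spohn_reducible3 nz.
- exact: spohn_reducible4 nz.
- exact: spohn_reducible5 nz.
- exact: spohn_reducible6 nz.
- exact: spohn_reducible7 nz.
- exact: spohn_reducible8 nz.
- exact: spohn_reducible9 nz.
- exact: spohn_reducible10 nz.
- exact: spohn_reducible11 nz.
- exact: spohn_reducible12 nz.
Qed.

End SpohnFactorizations.

(** * Payoff coordinates *)

(* [H] and the goal are disjunctions of conjunctions of equations of the same
   shape; [atom h] proves each goal equation from its counterpart [h]. *)
Ltac conds_by_index atom H :=
  lazymatch type of H with
  | _ \/ _ => destruct H as [H|H]; [left | right]; conds_by_index atom H
  | _ /\ _ =>
      let h := fresh "h" in
      destruct H as [h H]; split; [atom h | conds_by_index atom H]
  | _ => atom H
  end.

Ltac eq0_by_fmorph f h :=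
  apply/eqP; rewrite -(fmorph_eq0 f) ?(rmorphD, rmorphB, rmorphN, rmorphM);
  apply/eqP; exact h.

Lemma spohn_conds_fmorph (K L : fieldType) (f : {rmorphism K -> L})
    (p q r u w s : K) :
  spohn_conds (f p) (f q) (f r) (f u) (f w) (f s) -> spohn_conds p q r u w s.
Proof.
rewrite /spohn_conds => H.
by conds_by_index ltac:(eq0_by_fmorph f) H.
Qed.

Ltac eq_by_sub_eq h :=
  first [ apply: (eq_of_sub_eq (c := 1) h); ring
        | apply: (eq_of_sub_eq (c := -1) h); ring ].

Definition spohn_conditions (R : realType) (a11 a12 a21 a22 b11 b12 b21 b22 : R) :=
  a11 = a12 \/ a11 = a21 \/ a21 = a22 \/ b11 = b12 \/ b11 = b21 \/ b12 = b22 \/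
  (a12 = a22 /\ b21 = b22) \/ (a12 = a21 /\ b12 = b21) \/
  (a12 * (b12 - b22) + a21 * (b22 - b21) + a22 * (b21 - b12) = 0 /\
   a11 * (b22 - b12) + a21 * (b11 - b22) + a22 * (b12 - b11) = 0 /\
   a11 * (b22 - b21) + a12 * (b11 - b22) + a22 * (b21 - b11) = 0) \/
  (a11 * (b12 - b21) + a12 * (b21 - b22) + a21 * (b22 - b12) = 0 /\
   a12 * (b11 - b21) + a21 * (b12 - b11) + a22 * (b21 - b12) = 0 /\
   a11 * (b11 - b21) + a21 * (b22 - b11) + a22 * (b21 - b22) = 0) \/
  (a12 * (b22 - b21) + a21 * (b12 - b22) + a22 * (b21 - b12) = 0 /\
   a11 * (b22 - b21) + a21 * (b11 - b22) + a22 * (b21 - b11) = 0 /\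
   a11 * (b22 - b12) + a12 * (b11 - b22) + a22 * (b12 - b11) = 0) \/
  (a11 * (b12 - b21) + a12 * (b22 - b12) + a21 * (b21 - b22) = 0 /\
   a12 * (b11 - b12) + a21 * (b21 - b11) + a22 * (b12 - b21) = 0 /\
   a11 * (b11 - b21) + a12 * (b22 - b12) + a21 * (b21 - b11)
     + a22 * (b12 - b22) = 0).

Section SpohnCoordinates.

Variables (R : realType) (a11 a12 a21 a22 b11 b12 b21 b22 : R).

Local Notation p := (a11 - a21).
Local Notation q := (a12 - a22).
Local Notation r := (a21 - a22).
Local Notation u := (b11 - b12).
Local Notation w := (b22 - b21).
Local Notation s := (b21 - b12).

Lemma spohn_cubicE :
  spohn_cubic a11 a12 a21 a22 b11 b12 b21 b22 = spohn_mpoly p q r u w s.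
Proof.
rewrite -[spohn_cubic _ _ _ _ _ _ _ _]/(tern_cubic _ _ _ _ _ _ _) /spohn_mpoly.
by apply: tern_cubic_congr; rewrite /spohn_c1 /spohn_c2 /spohn_c3 /spohn_c4
  /spohn_c5 /spohn_c6 /spohn_c7; ring.
Qed.

Lemma spohn_conditionsE :
  spohn_conditions a11 a12 a21 a22 b11 b12 b21 b22 <-> spohn_conds p q r u w s.
Proof.
by rewrite /spohn_conditions /spohn_conds; split=> H;
  conds_by_index eq_by_sub_eq H.
Qed.

End SpohnCoordinates.

Theorem theorem3p2 (R : realType) (a11 a12 a21 a22 b11 b12 b21 b22 : R) :
  mpoly_reducible (spohn_cubic a11 a12 a21 a22 b11 b12 b21 b22)
  <->
  (spohn_cubic a11 a12 a21 a22 b11 b12 b21 b22 != 0 /\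
   (a11 = a12 \/
    a11 = a21 \/
    a21 = a22 \/
    b11 = b12 \/
    b11 = b21 \/
    b12 = b22 \/
    (a12 = a22 /\ b21 = b22) \/
    (a12 = a21 /\ b12 = b21) \/
    (a12 * (b12 - b22) + a21 * (b22 - b21) + a22 * (b21 - b12) = 0 /\
     a11 * (b22 - b12) + a21 * (b11 - b22) + a22 * (b12 - b11) = 0 /\
     a11 * (b22 - b21) + a12 * (b11 - b22) + a22 * (b21 - b11) = 0) \/
    (a11 * (b12 - b21) + a12 * (b21 - b22) + a21 * (b22 - b12) = 0 /\
     a12 * (b11 - b21) + a21 * (b12 - b11) + a22 * (b21 - b12) = 0 /\
     a11 * (b11 - b21) + a21 * (b22 - b11) + a22 * (b21 - b22) = 0) \/
    (a12 * (b22 - b21) + a21 * (b12 - b22) + a22 * (b21 - b12) = 0 /\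
     a11 * (b22 - b21) + a21 * (b11 - b22) + a22 * (b21 - b11) = 0 /\
     a11 * (b22 - b12) + a12 * (b11 - b22) + a22 * (b12 - b11) = 0) \/
    (a11 * (b12 - b21) + a12 * (b22 - b12) + a21 * (b21 - b22) = 0 /\
     a12 * (b11 - b12) + a21 * (b21 - b11) + a22 * (b12 - b21) = 0 /\
     a11 * (b11 - b21) + a12 * (b22 - b12) + a21 * (b21 - b11)
       + a22 * (b12 - b22) = 0))).
Proof.
rewrite -/(spohn_conditions a11 a12 a21 a22 b11 b12 b21 b22) spohn_cubicE.
split=> [red | [nz /spohn_conditionsE conds]]; last exact: spohn_reducible nz conds.
split; first by case: red.
apply/spohn_conditionsE/(@spohn_conds_fmorph _ _ (real_complex R)).
have [al [be [ga [nz L0]]]] := tern_cubic_vanish_plane red.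
apply: (spohn_conds_of_vanish_plane _ nz) => [|x y z /L0 <-].
  by rewrite pnatr_eq0.
by rewrite /spohn_form !(rmorphD, rmorphB, rmorphN, rmorphM).
Qed.
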